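(* Let $\mathrm{GNN}$ be a node-most-expressive GNN and $\mathrm{AGG}$ an injective function on finite multisets of node representations, and fix a labeling trick. For any node sets $S,S'$ of graphs ${\mathcal A},{\mathcal A}'$ and any integer $h\ge 0$, let ${\mathcal A}^{(S)}_{(S,h)}$ denote the labeled graph obtained by applying the labeling trick to $(S,{\mathcal A}_{(S,h)})$, and set $\mathrm{GNN}(S,{\mathcal A}^{(S)}_{(S,h)}):=\mathrm{AGG}(\{\mathrm{GNN}(i,{\mathcal A}^{(S)}_{(S,h)})\mid i\in S\})$. Then $$\mathrm{GNN}(S,{\mathcal A}^{(S)}_{(S,h)})=\mathrm{GNN}(S',{\mathcal A}'^{(S')}_{(S',h)})\iff (S,{\mathcal A}_{(S,h)})\simeq(S',{\mathcal A}'_{(S',h)}).$$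
   Context: Graphs are encoded by tensors ${\mathcal A}\in\mathbb R^{m\times m\times k}$ (diagonal: node features; off-diagonal: edge features; first slice: adjacency matrix). The $h$-hop enclosing subgraph ${\mathcal A}_{(S,h)}$ is the subgraph (with features) induced by the nodes $\bigcup_{j\in S}\{i: d(i,j)\le h\}$, $d$ the shortest-path distance, with nodes reindexed $1,\dots,m$. A permutation $\pi$ acts by $\pi(S)=\{\pi(i):i\in S\}$ and $\pi({\mathcal A})_{\pi(i),\pi(j),:}={\mathcal A}_{i,j,:}$; $(S,{\mathcal A})\simeq(S',{\mathcal A}')$ iff the two graphs have the same number of nodes and some $\pi$ has $S=\pi(S')$, ${\mathcal A}=\pi({\mathcal A}')$. A GNN is node-most-expressive if $\mathrm{GNN}(i,{\mathcal A})=\mathrm{GNN}(j,{\mathcal A}')\iff(\{i\},{\mathcal A})\simeq(\{j\},{\mathcal A}')$ for all graphs (of any size and feature dimension). A labeling trick assigns to each $(S,{\mathcal A})$ (graph with $m$ nodes) a labeling tensor ${\mathcal L}^{(S)}\in\mathbb R^{m\times m\times d}$ that is stacked onto ${\mathcal A}$ in the third dimension to form ${\mathcal A}^{(S)}$, satisfying for all $S,{\mathcal A},S',{\mathcal A}',\pi$: (1) ${\mathcal L}^{(S)}=\pi({\mathcal L}^{(S')})\Rightarrow S=\pi(S')$; (2) $S=\pi(S')$ and ${\mathcal A}=\pi({\mathcal A}')\Rightarrow{\mathcal L}^{(S)}=\pi({\mathcal L}^{(S')})$. *)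

From Stdlib Require Import Reals Permutation.
From mathcomp Require Import all_boot all_order all_algebra.
From mathcomp Require Import Rstruct.
From mathcomp Require Import fingroup perm.

Set Implicit Arguments.
Unset Strict Implicit.
Unset Printing Implicit Defensive.

Local Open Scope ring_scope.

Definition tensor (m k : nat) := 'I_m -> 'I_m -> 'I_k -> R.

(* A graph with m nodes and k.+1 >= 1 feature slices; slice 0 is the
   adjacency matrix. Packed together with a node set S. *)
Record lgraph := LG { lm : nat; lk : nat; lS : {set 'I_lm}; lA : tensor lm lk.+1 }.

Definition permT (m k : nat) (pi : {perm 'I_m}) (A : tensor m k) : tensor m k :=
  fun i j c => A (pi^-1 i)%g (pi^-1 j)%g c.

(* (S, A) ~= (S', A'): same number of nodes (and same shape), and some pi
   with S = pi(S'), A = pi(A'). *)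
Definition iso (G G' : lgraph) : Prop :=
  exists pi : {perm 'I_(lm G')}, G = LG (pi @: @lS G') (permT pi (@lA G')).

Definition edge (m k : nat) (A : tensor m k.+1) (i j : 'I_m) : bool :=
  A i j ord0 != 0.

(* within A h i j  <=>  d(i,j) <= h  (shortest-path distance) *)
Fixpoint within (m k : nat) (A : tensor m k.+1) (h : nat) (i j : 'I_m) : bool :=
  if h is h'.+1 then within A h' i j || [exists l, edge A i l && within A h' l j]
  else i == j.

Definition hood (m k : nat) (h : nat) (S : {set 'I_m}) (A : tensor m k.+1) : {set 'I_m} :=
  [set i | [exists j in S, within A h i j]].

(* h-hop enclosing subgraph (S, A_(S,h)), nodes reindexed 0..#|hood|-1
   (in increasing order of the original indices). *)
Definition encl_subgraph (m k : nat) (h : nat) (S : {set 'I_m}) (A : tensor m k.+1) : lgraph :=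
  let N := hood h S A in
  @LG #|N| k [set a : 'I_#|N| | enum_val a \in S]
      (fun a b c => A (enum_val a) (enum_val b) c).

Definition stack (m k d : nat) (A : tensor m k.+1) (L : tensor m d) : tensor m (k + d).+1 :=
  fun i j c =>
    match split (cast_ord (esym (addSn k d)) c) with
    | inl c1 => A i j c1
    | inr c2 => L i j c2
    end.

Definition node_most_expressive (Out : Type)
  (gnn : forall m k, 'I_m -> tensor m k.+1 -> Out) : Prop :=
  forall m k (i : 'I_m) (A : tensor m k.+1) m' k' (j : 'I_m') (A' : tensor m' k'.+1),
    gnn m k i A = gnn m' k' j A' <-> iso (LG [set i] A) (LG [set j] A').

(* AGG is a well-defined, injective function on finite multisets
   (multisets represented as lists up to permutation). *)
Definition multiset_injective (Out Y : Type) (agg : seq Out -> Y) : Prop :=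
  forall s t, agg s = agg t <-> Permutation s t.

Definition labeling_trick (d : nat)
  (lab : forall m k, {set 'I_m} -> tensor m k.+1 -> tensor m d) : Prop :=
  (forall m k k' (S : {set 'I_m}) (A : tensor m k.+1) (S' : {set 'I_m}) (A' : tensor m k'.+1)
          (pi : {perm 'I_m}),
      lab m k S A = permT pi (lab m k' S' A') -> S = pi @: S') /\
  (forall m k (S : {set 'I_m}) (A : tensor m k.+1) (S' : {set 'I_m}) (A' : tensor m k.+1)
          (pi : {perm 'I_m}),
      S = pi @: S' -> A = permT pi A' -> lab m k S A = permT pi (lab m k S' A')).

Definition labeled (d : nat) (lab : forall m k, {set 'I_m} -> tensor m k.+1 -> tensor m d)
  (G : lgraph) : tensor (lm G) (lk G + d).+1 :=
  stack (@lA G) (lab (lm G) (lk G) (@lS G) (@lA G)).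

Definition gnn_set (Out Y : Type) (gnn : forall m k, 'I_m -> tensor m k.+1 -> Out)
  (agg : seq Out -> Y) (d : nat) (lab : forall m k, {set 'I_m} -> tensor m k.+1 -> tensor m d)
  (h : nat) (m k : nat) (S : {set 'I_m}) (A : tensor m k.+1) : Y :=
  let G := encl_subgraph h S A in
  agg [seq gnn (lm G) (lk G + d)%N i (@labeled d lab G) | i <- enum (@lS G)].

From Stdlib Require Import Reals Permutation.
From mathcomp Require Import all_boot all_order all_algebra.
From mathcomp Require Import Rstruct.
From mathcomp Require Import fingroup perm.
From Stdlib Require Import FunctionalExtensionality Eqdep_dec.

(* A node-most-expressive GNN is permutation equivariant, and the labeling
   trick is too, so an isomorphism of labeled graphs only permutes the
   multiset of representations of the target nodes. Conversely, if the two
   multisets agree, some node i of S and some node j of S' get the same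
   representation, so (i, A^(S)) ~ (j, A'^(S')); the permutation
   witnessing this matches both the graphs and the labelings, and a
   labeling determines its node set, so it maps S' onto S. Applied to the
   enclosing subgraphs, which contain S, this gives the corollary. *)

Set Implicit Arguments.
Unset Strict Implicit.
Unset Printing Implicit Defensive.

Lemma perm_eq_Permutation (T : eqType) (s t : seq T) :
  perm_eq s t -> Permutation s t.
Proof.
elim: s t => [|x s IHs] t eq_st.
  by have := perm_size eq_st; case: t eq_st.
have t_x : x \in t by rewrite -(perm_mem eq_st) mem_head.
case/splitPr: t_x eq_st => t1 t2 eq_st.
apply: Permutation_cons_app; apply: IHs.
by rewrite -(perm_cons x) (perm_trans eq_st) // -cat1s perm_catCA.
Qed.

Lemma mem_In (T : eqType) (x : T) (s : seq T) : x \in s -> List.In x s.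
Proof. by elim: s => //= y s IHs; rewrite inE => /predU1P [->|/IHs]; [left|right]. Qed.

Lemma LG_inj m k (S1 S2 : {set 'I_m}) (A1 A2 : tensor m k.+1) :
  LG S1 A1 = LG S2 A2 -> S1 = S2 /\ A1 = A2.
Proof.
have sigT_inj := inj_pair2_eq_dec _ PeanoNat.Nat.eq_dec.
by case=> /(sigT_inj _ _ _ _) -> /(sigT_inj _ _ _ _) /(sigT_inj _ _ _ _) ->.
Qed.

Lemma permT_stack m k d (pi : {perm 'I_m}) (A : tensor m k.+1) (L : tensor m d) :
  stack (permT pi A) (permT pi L) = permT pi (stack A L).
Proof. by []. Qed.

Lemma stack_inj m k d (A A' : tensor m k.+1) (L L' : tensor m d) :
  stack A L = stack A' L' -> A = A' /\ L = L'.
Proof.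
move=> eqAL; split.
- apply: functional_extensionality => i; apply: functional_extensionality => j.
  apply: functional_extensionality => c.
  have := f_equal (fun T => T i j (cast_ord (addSn k d) (lshift d c))) eqAL.
  by rewrite /stack cast_ordK (unsplitK (inl c)).
- apply: functional_extensionality => i; apply: functional_extensionality => j.
  apply: functional_extensionality => c.
  have := f_equal (fun T => T i j (cast_ord (addSn k d) (rshift k.+1 c))) eqAL.
  by rewrite /stack cast_ordK (unsplitK (inr c)).
Qed.

Lemma perm_enum_imset (T : finType) (pi : {perm T}) (S : {set T}) :
  perm_eq (enum (pi @: S)) (map pi (enum S)).
Proof.
apply: uniq_perm; rewrite ?enum_uniq ?(map_inj_uniq perm_inj) ?enum_uniq //.
move=> x; rewrite mem_enum; apply/imsetP/mapP => -[y Sy ->];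
  by exists y; rewrite // ?mem_enum in Sy *.
Qed.

Lemma within_refl m k (A : tensor m k.+1) h i : within A h i i.
Proof. by elim: h => [|h IHh] //=; rewrite IHh. Qed.

Lemma sub_hood m k h (S : {set 'I_m}) (A : tensor m k.+1) : S \subset hood h S A.
Proof. by apply/subsetP => i Si; rewrite inE; apply/existsP; exists i; rewrite Si within_refl. Qed.

Lemma encl_subgraph_neq0 m k h (S : {set 'I_m}) (A : tensor m k.+1) :
  S != set0 -> lS (encl_subgraph h S A) != set0.
Proof.
case/set0Pn => i Si; have hood_i := subsetP (sub_hood h S A) i Si.
by apply/set0Pn; exists (enum_rank_in hood_i i); rewrite inE /= enum_rankK_in.
Qed.

Section NodeMultiset.
Variables (Out : Type) (gnn : forall {m k}, 'I_m -> tensor m k.+1 -> Out).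
Variables (d : nat) (lab : forall m k, {set 'I_m} -> tensor m k.+1 -> tensor m d).
Hypothesis gnn_expressive : node_most_expressive (@gnn).
Hypothesis lab_trick : labeling_trick lab.

Definition node_reps (G : lgraph) : seq Out :=
  [seq gnn i (@labeled _ lab G) | i <- enum (lS G)].

Lemma gnn_permT m k (pi : {perm 'I_m}) (A : tensor m k.+1) i :
  gnn i (permT pi A) = gnn (pi^-1 i)%g A.
Proof. by apply/gnn_expressive; exists pi; rewrite imset_set1 permKV. Qed.

Lemma labeled_permT m k (pi : {perm 'I_m}) (S : {set 'I_m}) (A : tensor m k.+1) :
  @labeled _ lab (LG (pi @: S) (permT pi A)) = permT pi (@labeled _ lab (LG S A)).
Proof. by rewrite /labeled /= (proj2 lab_trick _ _ _ _ _ _ pi erefl erefl). Qed.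

Lemma node_reps_iso (G G' : lgraph) :
  iso G G' -> Permutation (node_reps G) (node_reps G').
Proof.
case: G' => m k S A [pi ->]; rewrite /node_reps labeled_permT (eq_map (gnn_permT _ _)) /=.
apply: Permutation_trans (Permutation_map _ (perm_eq_Permutation (perm_enum_imset pi S))) _.
(* [List.map] and [seq.map] are convertible. *)
rewrite List.map_map; apply: Permutation_refl'.
by apply: (@eq_map _ _ (fun i => gnn (pi^-1 (pi i))%g _)) => i; rewrite permK.
Qed.

Lemma iso_of_labeled_node_iso (G G' : lgraph) (i : 'I_(lm G)) (j : 'I_(lm G')) :
  iso (LG [set i] (@labeled _ lab G)) (LG [set j] (@labeled _ lab G')) -> iso G G'.
Proof.
case: G G' i j => m k S A [m' k' S' A'] /= i j [pi eqG].
have eq_m : m = m' by have := f_equal lm eqG.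
subst m'.
have eq_k : k = k' by have := f_equal lk eqG => /= /addIn.
subst k'.
case: (LG_inj eqG) => _; rewrite /labeled /= -permT_stack.
case/stack_inj => -> /(proj1 lab_trick) ->.
by exists pi.
Qed.

Lemma iso_node_reps (G G' : lgraph) :
  lS G != set0 -> Permutation (node_reps G) (node_reps G') -> iso G G'.
Proof.
case/set0Pn => i Si perm_reps.
have : List.In (gnn i (@labeled _ lab G)) (node_reps G').
  by apply: Permutation_in perm_reps _; apply/List.in_map/mem_In; rewrite mem_enum.
case/List.in_map_iff => j [eq_ji _].
apply: (@iso_of_labeled_node_iso _ _ i j); apply/gnn_expressive; exact: esym eq_ji.
Qed.

End NodeMultiset.

Theorem corollary1 (Out Y : Type)
  (gnn : forall m k, 'I_m -> tensor m k.+1 -> Out)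
  (agg : seq Out -> Y) (d : nat)
  (lab : forall m k, {set 'I_m} -> tensor m k.+1 -> tensor m d) :
  node_most_expressive gnn ->
  multiset_injective agg ->
  labeling_trick lab ->
  forall (m k : nat) (S : {set 'I_m}) (A : tensor m k.+1)
         (m' k' : nat) (S' : {set 'I_m'}) (A' : tensor m' k'.+1) (h : nat),
    S != set0 -> S' != set0 ->
    (@gnn_set Out Y gnn agg d lab h m k S A = @gnn_set Out Y gnn agg d lab h m' k' S' A'
     <-> iso (@encl_subgraph m k h S A) (@encl_subgraph m' k' h S' A')).
Proof.
move=> gnn_expressive agg_inj lab_trick m k S A m' k' S' A' h S_neq0 _.
(* Only the forward direction needs a nonempty node set, and on one side only. *)
rewrite /gnn_set agg_inj; split.
- apply: iso_node_reps => //; exact: encl_subgraph_neq0.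
- exact: node_reps_iso.
Qed.
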